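(* Let $\alpha:X\to\mathbb PLX$ be a measurable map (a continuous probabilistic transition system). Let $\tilde\alpha^\#=\langle\tilde\alpha^\#_1,\tilde\alpha^\#_*,a\mapsto\tau_a\rangle:\mathbb DX\to F\mathbb DX$ be given by $$\tilde\alpha^\#_1(m)=\int_X\alpha(-)(LX)\,dm,\quad \tilde\alpha^\#_*(m)=\int_X\alpha(-)(1)\,dm,\quad \tau_a(m)(S)=\int_X\alpha(-)(\{a\}\times S)\,dm\ (S\in\Sigma_X).$$ Then $\tilde\alpha^\#$ satisfies $\tilde\alpha^\#_1(m)=\tilde\alpha^\#_*(m)+\sum_{a\in A}\tilde\alpha^\#_1(\tau_a(m))$ for all $m\in\mathbb DX$, so there is a unique $F$-coalgebra morphism $[\![-]\!]:\mathbb DX\to\mathbb DA^\infty$ from $\tilde\alpha^\#$ to $\Pi$. Writing $\langle\!\langle x\rangle\!\rangle=[\![\eta_X(x)]\!]$ for $x\in X$, we have for all $m\in\mathbb DX$ and all $S\in S_\infty$: $$[\![m]\!](S)=\int_X\langle\!\langle -\rangle\!\rangle(S)\,dm.$$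
   Context: Work in $\mathbf{Meas}$. $\mathbb I=[0,1]$; $A$ finite alphabet (discrete $\sigma$-algebra); $1=\{*\}$. $LX=A\times X+1$ with $\sigma$-algebra $(\mathcal P(A)\otimes\Sigma_X)\oplus\mathcal P(1)$. For a measurable space $X$, $\mathbb DX$ is the set of sub-probability measures on $X$ and $\mathbb PX\subseteq\mathbb DX$ the probability measures, both with the $\sigma$-algebra generated by $m\mapsto m(S)$; $\eta_X(x)$ is the Dirac measure at $x$. $A^\infty=A^*\cup A^\omega$ with $\sigma$-algebra generated by $S_\infty=\{\emptyset\}\cup\{\{w\}\mid w\in A^*\}\cup\{wA^\infty\mid w\in A^*\}$ ($\varepsilon$ the empty word, $wS=\{wv\mid v\in S\}$). $F$ is the functor $FX=\mathbb I\times\mathbb I\times X^A$, $Ff=\mathrm{id}\times\mathrm{id}\times f^A$. $\Pi:\mathbb DA^\infty\to F\mathbb DA^\infty$ is $\Pi(m)=\langle m(A^\infty),m(\{\varepsilon\}),a\mapsto m_a\rangle$ with $m_a(S)=m(aS)$. An $F$-coalgebra morphism from $(Y,\beta)$ to $(\mathbb DA^\infty,\Pi)$ is a measurable $h$ with $\Pi\circ h=Fh\circ\beta$. *)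

From HB Require Import structures.
From mathcomp Require Import all_boot all_order all_algebra.
From mathcomp Require Import all_classical all_reals all_analysis.
From mathcomp Require Import measurable_realfun giry.
Set Implicit Arguments.
Unset Strict Implicit.
Unset Printing Implicit Defensive.
Import Order.TTheory GRing.Theory Num.Theory.
Local Open Scope classical_set_scope.
Local Open Scope ereal_scope.

Section LX_def.
Context {d : measure_display} (A : finType) (X : measurableType d).

Definition LXcar := option (A * X)%type.
Definition injL (a : A) (x : X) : LXcar := Some (a, x).

(* (P(A) (x) Sigma_X) (+) P(1), generated by the rectangles {a} x S and {*} *)
Definition LX_gen : set (set LXcar) :=
  [set B | exists a S, measurable S /\ B = injL a @` S] `|` [set [set None]].

Definition LX : Type := g_sigma_algebraType LX_gen.

Lemma measurable_injL (a : A) (S : set X) : measurable S ->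
  measurable (injL a @` S : set LX).
Proof. by move=> mS; apply: sub_gen_smallest; left; exists a, S. Qed.

Lemma measurable_one : measurable ([set None] : set LX).
Proof. by apply: sub_gen_smallest; right. Qed.
End LX_def.

Section tau_def.
Context {R : realType} {d : measure_display} (A : finType) (X : measurableType d).
Variables (alpha : X -> giry (LX A X) R)
  (malpha : measurable_fun [set: X] alpha) (a : A) (m : giry X R).

Let evm (B : set (LX A X)) : measurable B ->
  measurable_fun [set: X] (fun x => alpha x B).
Proof.
move=> mB; exact: (measurableT_comp (measurable_giry_ev mB) malpha).
Qed.

Let tau (S : set X) := \int[m]_x alpha x (injL a @` S).

Let tau0 : tau set0 = 0.
Proof. by rewrite /tau image_set0; under eq_integral do rewrite measure0; rewrite integral0. Qed.

Let tau_ge0 S : 0 <= tau S.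
Proof. by rewrite /tau integral_ge0. Qed.

Let tau_sigma_additive : semi_sigma_additive tau.
Proof.
move=> F mF tF mUF.
rewrite [X in _ --> X](_ : _ =
    \int[m]_x (\sum_(0 <= k <oo) alpha x (injL a @` F k))); last first.
  apply: eq_integral => x _; rewrite image_bigcup.
  apply/esym/cvg_lim => //; apply: measure_sigma_additive.
  - by move=> k; exact: measurable_injL.
  - move=> i j _ _ [p [[y Fiy <-] [z Fjz]]] [zy].
    by apply: tF => //; exists y; split => //; rewrite -zy.
rewrite [X in X @ _](_ : _ =
    (fun n => \int[m]_x (\sum_(0 <= i < n) alpha x (injL a @` F i)))); last first.
  apply/funext => n; rewrite -ge0_integral_sum// => k.
  by apply: evm; exact: measurable_injL.
apply: cvg_monotone_convergence => //.
- move=> n; apply: emeasurable_sum => k.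
  by apply: evm; exact: measurable_injL.
- by move=> n x _; rewrite sume_ge0.
- by move=> x _ i j ij; exact: ereal_nondecreasing_series.
Qed.

HB.instance Definition _ := isMeasure.Build d X R tau
  tau0 tau_ge0 tau_sigma_additive.

Let tau_setT : tau [set: X] <= 1.
Proof.
rewrite (@le_trans _ _ (\int[m]_x (cst 1 x)))//.
  apply: ge0_le_integral => //.
  - by apply: evm; exact: measurable_injL.
  - move=> x _; apply: (@le_trans _ _ (alpha x [set: LX A X])); last first.
      exact: sprobability_setT.
    by apply: le_measure => //; rewrite inE//; exact: measurable_injL.
by rewrite integral_cst// mul1e; exact: sprobability_setT.
Qed.

HB.instance Definition _ := Measure_isSubProbability.Build _ _ _ tau tau_setT.

Definition tauD : giry X R := tau.

Lemma tauDE S : tauD S = \int[m]_x alpha x (injL a @` S).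
Proof. by []. Qed.
End tau_def.

Inductive word (A : Type) : Type :=
| WFin of seq A
| WInf of (nat -> A).

HB.instance Definition _ (A : Type) := gen_eqMixin (word A).
HB.instance Definition _ (A : Type) := gen_choiceMixin (word A).
HB.instance Definition _ (A : Type) := isPointed.Build (word A) (WFin [::]).

Section words.
Context (A : finType).

Definition epsw : word A := WFin [::].

Definition wcons (a : A) (v : word A) : word A :=
  match v with
  | WFin u => WFin (a :: u)
  | WInf f => WInf (fun n => if n is n'.+1 then f n' else a)
  end.

Definition cyl (w : seq A) : set (word A) :=
  [set v | match v with
           | WFin u => exists t, u = w ++ t
           | WInf f => mkseq f (size w) = w
           end].

Definition S_inf : set (set (word A)) :=
  [set set0] `|` [set [set WFin w] | w in [set: seq A]]
             `|` [set cyl w | w in [set: seq A]].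

Definition Ainf : Type := g_sigma_algebraType S_inf.
End words.

Section coalg.
Context {R : realType} {d : measure_display} (A : finType) (X : measurableType d).
Variables (alpha : X -> giry (LX A X) R) (malpha : measurable_fun [set: X] alpha).

Definition beta1 (m : giry X R) : \bar R := \int[m]_x alpha x [set: LX A X].
Definition betaS (m : giry X R) : \bar R := \int[m]_x alpha x [set None].
Definition tau (a : A) (m : giry X R) : giry X R := tauD malpha a m.

(** h : D X -> D A^oo is an F-coalgebra morphism from tilde-alpha^# to Pi:
    h measurable and Pi (h m) = F h (tilde-alpha^# m), componentwise:
    (h m)(A^oo) = tilde-alpha^#_1 m, (h m)({eps}) = tilde-alpha^#_* m and
    (h m)_a = h (tau_a m) as measures, for each a. *)
Definition coalg_morph (h : giry X R -> giry (Ainf A) R) : Prop :=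
  measurable_fun [set: giry X R] h /\
  forall m : giry X R,
    [/\ h m [set: Ainf A] = beta1 m,
        h m [set epsw A] = betaS m &
        forall (a : A) (S : set (Ainf A)), measurable S ->
          h m (wcons a @` S) = h (tau a m) S].
End coalg.

From HB Require Import structures.
From mathcomp Require Import all_boot all_order all_algebra.
From mathcomp Require Import all_classical all_reals all_analysis.
From mathcomp Require Import measurable_realfun giry.
Import Order.TTheory GRing.Theory Num.Theory.
Local Open Scope classical_set_scope.
Local Open Scope ereal_scope.
Set Implicit Arguments.
Unset Strict Implicit.
Unset Printing Implicit Defensive.

(* The behaviour [[m]] is pinned down on the pi-system S_inf: iterating the
   coalgebra equations along a word w forces [[m]](w A^oo) = beta1 (tau_w m) and
   [[m]]{w} = betaS (tau_w m), where tau_w composes the tau_a along w; this gives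
   uniqueness, and the integral formula because tau_w m = \int tau_w (delta_x) dm.
   For existence, the splitting beta1 = betaS + sum_a beta1 o tau_a lets us nest
   half-open intervals: the interval of w, of length beta1 (tau_w m), is cut into
   a piece of length betaS (tau_w m) coding {w} and the intervals of the words w a.
   Sending a point to the word whose intervals contain it pushes Lebesgue measure
   forward to the required measure on A^oo. *)

Section words.
Context (A : finType).
Implicit Types (v w : seq A) (z : word A) (a : A).

Definition wprefix z n : seq A :=
  match z with WFin u => take n u | WInf f => mkseq f n end.

Lemma cylE w z : cyl w z <-> wprefix z (size w) = w.
Proof.
case: z => [u|f] /=; last by [].
split=> [[t ->]|h]; first by rewrite take_size_cat.
by exists (drop (size w) u); rewrite -{1}(cat_take_drop (size w) u) h.
Qed.

Lemma wprefix_take z n k : (n <= k)%N -> wprefix z n = take n (wprefix z k).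
Proof.
case: z => [u|f] /= nk; first by rewrite take_takel.
by rewrite /mkseq -map_take take_iota minnC (minn_idPr nk).
Qed.

Lemma subset_cyl v w : v = take (size v) w -> cyl w `<=` cyl v.
Proof.
move=> vw z /cylE hz; apply/cylE.
have le : (size v <= size w)%N by rewrite {1}vw size_take geq_minr.
by rewrite (wprefix_take _ le) hz.
Qed.

Lemma cyl_prefix v w z : cyl v z -> cyl w z ->
  (size v <= size w)%N -> v = take (size v) w.
Proof. by move=> /cylE hv /cylE hw le; rewrite -{1}hv -hw (wprefix_take _ le). Qed.

Lemma cyl_nil : cyl [::] = [set: word A].
Proof. by apply/seteqP; split=> // z _; apply/cylE; case: z => [u|f] //=; rewrite take0. Qed.

Lemma setI_closed_S_inf : setI_closed (@S_inf A).
Proof.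
have cylI v w : (size v <= size w)%N -> S_inf (cyl v `&` cyl w).
  move=> le; have [[z [zv zw]]|/set0P/negP/negPn/eqP ->] :=
    pselect (cyl v `&` cyl w !=set0); last by left; left.
  by rewrite setIidr; [right; exists w | exact/subset_cyl/(cyl_prefix zv zw)].
have finI v w : S_inf ([set WFin v] `&` cyl w).
  have [h|h] := pselect (cyl w (WFin v)).
    by rewrite setIidl; [left; right; exists v|move=> z ->].
  by rewrite (_ : _ `&` _ = set0); [left; left|apply/seteqP; split=> // z [-> ]].
move=> X Y [[->|[v _ <-]]|[v _ <-]] [[->|[w _ <-]]|[w _ <-]];
  rewrite ?set0I ?setI0; try by left; left.
- have [->|ne] := eqVneq v w; first by rewrite setIid; left; right; exists w.
  rewrite (_ : _ `&` _ = set0); first by left; left.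
  by apply/seteqP; split=> // z [-> []] /eqP; rewrite (negbTE ne).
- exact: finI.
- by rewrite setIC; exact: finI.
- have [le|lt] := leqP (size v) (size w); first exact: cylI.
  by rewrite setIC; apply: cylI; exact: ltnW.
Qed.

Lemma wcons_inj a : injective (wcons a).
Proof.
move=> [u|f] [v|g] //=; first by case=> ->.
case=> e; congr WInf; apply/funext => n.
by have := congr1 (fun h => h n.+1) e.
Qed.

Lemma mkseq_cons (g : nat -> A) n :
  mkseq g n.+1 = g 0%N :: mkseq (fun k => g k.+1) n.
Proof. by rewrite /mkseq /= -[in LHS](addn0 1%N) iotaDl -map_comp. Qed.

Lemma image_wcons_cyl a w : wcons a @` cyl w = cyl (a :: w).
Proof.
apply/seteqP; split.
  move=> _ [z /cylE hz <-]; apply/cylE; rewrite [size _]/= -[in RHS]hz.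
  by case: z {hz} => [u|f] //=; rewrite mkseq_cons.
move=> [u|f] /cylE /=.
  by case: u => [|b u] //= [-> hu]; exists (WFin u) => //; exact/cylE.
rewrite mkseq_cons => -[ha hf]; exists (WInf (fun n => f n.+1)).
  by apply/cylE; rewrite /= hf.
by rewrite /=; congr WInf; apply/funext => -[|n].
Qed.

Lemma image_wcons_set1 a w : wcons a @` [set WFin w] = [set WFin (a :: w)].
Proof.
by apply/seteqP; split=> [_ [_ -> <-]//|_ ->]; exists (WFin w).
Qed.

Lemma image_wcons_setI a (U V : set (word A)) :
  wcons a @` (U `&` V) = wcons a @` U `&` wcons a @` V.
Proof.
apply/seteqP; split; first by move=> _ [z [hU hV] <-]; split; exists z.
by move=> _ [[z hz <-] [y hy /wcons_inj yz]]; exists z => //; split => //; rewrite -yz.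
Qed.

Lemma measurable_S_inf (S : set (Ainf A)) : S_inf S -> measurable S.
Proof. exact: sub_gen_smallest. Qed.

Lemma measurable_cyl w : measurable (cyl w : set (Ainf A)).
Proof. by apply: measurable_S_inf; right; exists w. Qed.

Lemma measurable_set1_WFin w : measurable ([set WFin w] : set (Ainf A)).
Proof. by apply: measurable_S_inf; left; right; exists w. Qed.

Lemma measurable_image_wcons a (S : set (Ainf A)) : measurable S ->
  measurable (wcons a @` S : set (Ainf A)).
Proof.
pose H := [set S : set (Ainf A) | measurable (wcons a @` S : set (Ainf A))].
suff: <<s @S_inf A >> `<=` H by apply.
apply: smallest_sub; first split.
- by rewrite /H /= image_set0.
- move=> B HB; rewrite /H /= setTD.
  have -> : wcons a @` (~` B) = cyl [:: a] `\` wcons a @` B.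
    apply/seteqP; split.
      move=> _ [z nB <-]; split; first by rewrite -image_wcons_cyl cyl_nil; exists z.
      by move=> [y By /wcons_inj yz]; apply: nB; rewrite -yz.
    move=> z [+ nB]; rewrite -image_wcons_cyl => -[y _ yz]; exists y => //.
    by move=> By; apply: nB; exists y.
  by apply: measurableD => //; exact: measurable_cyl.
- by move=> F HF; rewrite /H /= image_bigcup; exact: bigcupT_measurable.
move=> B [[->|[w _ <-]]|[w _ <-]]; rewrite /H /=.
- by rewrite image_set0.
- by rewrite image_wcons_set1; exact: measurable_set1_WFin.
- by rewrite image_wcons_cyl; exact: measurable_cyl.
Qed.

End words.

Lemma subprobability_setT_fin d (T : measurableType d) (R : realType)
    (mu : giry T R) : mu [set: T] < +oo.
Proof. by rewrite (le_lt_trans (@sprobability_setT _ _ _ mu)) // ltry. Qed.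

Section wcons_measure.
Context (R : realType) (A : finType) (nu : giry (Ainf A) R) (a : A).

Definition wcons_measure (S : set (Ainf A)) := nu (wcons a @` S).

Let wcons_measure0 : wcons_measure set0 = 0.
Proof. by rewrite /wcons_measure image_set0 measure0. Qed.

Let wcons_measure_ge0 S : 0 <= wcons_measure S.
Proof. exact: measure_ge0. Qed.

Let wcons_measure_sigma_additive : semi_sigma_additive wcons_measure.
Proof.
move=> F mF tF mUF; rewrite /wcons_measure image_bigcup.
apply: measure_semi_sigma_additive.
- by move=> k; exact: measurable_image_wcons.
- apply/trivIsetP => /= i j _ _ ij; rewrite -image_wcons_setI.
  by move/trivIsetP : tF => /(_ _ _ _ _ ij) ->//; rewrite image_set0.
- by rewrite -image_bigcup; exact: measurable_image_wcons.
Qed.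

HB.instance Definition _ := isMeasure.Build _ _ _ wcons_measure
  wcons_measure0 wcons_measure_ge0 wcons_measure_sigma_additive.

End wcons_measure.

Lemma measure_unique_S_inf (R : realType) (A : finType)
    (mu nu : ({measure set (Ainf A) -> \bar R})%R) :
  mu [set: Ainf A] < +oo -> (forall S, S_inf S -> mu S = nu S) ->
  forall S, measurable S -> mu S = nu S.
Proof.
move=> fin muE S mS.
apply: (@measure_unique _ R (Ainf A) (@S_inf A) (fun _ => [set: Ainf A]) erefl
  (@setI_closed_S_inf A) _ _ mu nu muE _ S mS) => //.
- by move=> _; rewrite -cyl_nil; right; exists [::].
- by rewrite bigcup_const.
Qed.

Lemma lebesgue_measure_itv_co (R : realType) (x y : R) : (0 <= y)%R ->
  lebesgue_measure [set` Interval (BLeft x) (BLeft (x + y)%R)] = y%:E.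
Proof.
move=> y0; rewrite lebesgue_measure_itv /= lte_fin.
case: ifPn => [_|]; first by rewrite -EFinD addrAC subrr add0r.
by rewrite ltrDl -leNgt => y0'; apply/eqP; rewrite eq_sym eqe; apply/eqP/le_anti/andP.
Qed.

Section interval_coding.
Local Open Scope ring_scope.
Context (R : realType) (A : finType) (P Q : seq A -> R).
Hypotheses (P_ge0 : forall w, 0 <= P w) (Q_ge0 : forall w, 0 <= Q w)
  (PQ : forall w, P w = Q w + \sum_(a : A) P (rcons w a)).
Implicit Types (v w : seq A) (a b : A) (u : R).

Let n := #|A|.
Let F w (i : 'I_n) := P (rcons w (enum_val i)).
Let mass_before w k := \sum_(i < n | (i < k)%N) F w i.

Let mass_before_ge0 w k : 0 <= mass_before w k.
Proof. by apply: sumr_ge0 => i _; exact: P_ge0. Qed.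

Let mass_before_all w : mass_before w n = \sum_(a : A) P (rcons w a).
Proof.
transitivity (\sum_(i < n) F w i); first by apply: eq_bigl => i; rewrite ltn_ord.
by rewrite (big_enum_val (fun a => P (rcons w a))).
Qed.

Let mass_beforeS w (i : 'I_n) : mass_before w i.+1 = mass_before w i + F w i.
Proof.
rewrite /mass_before (bigD1 i) ?ltnSn //= addrC; congr (_ + _).
by apply: eq_bigl => j; rewrite ltnS ltn_neqAle andbC -val_eqE.
Qed.

Let mass_before_le w k l : (k <= l)%N -> mass_before w k <= mass_before w l.
Proof.
move=> kl; rewrite /mass_before [leRHS](bigID (fun i : 'I_n => (i < k)%N)) /=.
rewrite -[leLHS]addr0 lerD //; last by apply: sumr_ge0 => i _; exact: P_ge0.
rewrite le_eqVlt; apply/orP; left; apply/eqP; apply: eq_bigl => i.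
by case: (ltnP i k) => ik; rewrite ?andbF ?andbT // (leq_trans ik kl).
Qed.

Let F_rank w a : F w (enum_rank a) = P (rcons w a).
Proof. by rewrite /F enum_rankK. Qed.

(* The word w is coded by the interval [lend w, lend w + P w): an initial piece
   of length Q w codes {w}, followed by the intervals of the words w a in enum
   order. *)
Fixpoint offset p w : R :=
  if w is a :: w' then Q p + mass_before p (enum_rank a) + offset (rcons p a) w' else 0.

Definition lend w := offset [::] w.

Let offset_rcons p w a :
  offset p (rcons w a) = offset p w + Q (p ++ w) + mass_before (p ++ w) (enum_rank a).
Proof.
elim: w p => [|b w IH] p /=; first by rewrite cats0 add0r addr0.
by rewrite IH cat_rcons !addrA.
Qed.

Lemma lend_rcons w a : lend (rcons w a) = lend w + Q w + mass_before w (enum_rank a).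
Proof. by rewrite /lend offset_rcons. Qed.

Definition cyl_itv w : set R := [set u | lend w <= u /\ u < lend w + P w].
Definition fin_itv w : set R := [set u | lend w <= u /\ u < lend w + Q w].

Lemma cyl_itvE w : cyl_itv w = [set` Interval (BLeft (lend w)) (BLeft (lend w + P w))].
Proof. by apply/seteqP; split => u; rewrite /= in_itv /=; [move=> [-> ->]|move=> /andP[]]. Qed.

Lemma fin_itvE w : fin_itv w = [set` Interval (BLeft (lend w)) (BLeft (lend w + Q w))].
Proof. by apply/seteqP; split => u; rewrite /= in_itv /=; [move=> [-> ->]|move=> /andP[]]. Qed.

Lemma cyl_itv_rcons w a : cyl_itv (rcons w a) `<=` cyl_itv w.
Proof.
move=> u []; rewrite lend_rcons => h1 h2; split.
  by apply: le_trans h1; rewrite -addrA lerDl addr_ge0.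
apply: (lt_le_trans h2); rewrite -!addrA lerD2l (PQ w) lerD2l -F_rank -mass_beforeS.
by rewrite -mass_before_all; apply: mass_before_le.
Qed.

Lemma fin_itv_sub w : fin_itv w `<=` cyl_itv w.
Proof.
move=> u [h1 h2]; split => //; apply: (lt_le_trans h2).
by rewrite lerD2l (PQ w) lerDl -mass_before_all.
Qed.

Lemma fin_cyl_itv_rcons_disj w a u : fin_itv w u -> cyl_itv (rcons w a) u -> False.
Proof.
move=> [_ h2] [+ _]; rewrite lend_rcons => h1.
have h3 : lend w + Q w <= u by apply: le_trans h1; rewrite lerDl mass_before_ge0.
by move: (lt_le_trans h2 h3); rewrite ltxx.
Qed.

Lemma cyl_itv_rcons_disj w a b u : a != b ->
  cyl_itv (rcons w a) u -> cyl_itv (rcons w b) u -> False.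
Proof.
have lt_disj c e : (enum_rank c < enum_rank e)%N ->
    cyl_itv (rcons w c) u -> cyl_itv (rcons w e) u -> False.
  move=> ce [_ h2] [h1 _]; move: h1 h2; rewrite !lend_rcons => h1 h2.
  have := le_lt_trans h1 h2; rewrite -!addrA ltrD2l ltrD2l -F_rank -mass_beforeS.
  by rewrite ltNge mass_before_le.
move=> ab hu hv; have : enum_rank a != enum_rank b.
  by apply: contra ab => /eqP /enum_rank_inj ->.
by rewrite neq_ltn => /orP[ab'|ba']; [exact: lt_disj ab' hu hv|exact: lt_disj ba' hv hu].
Qed.

Lemma cyl_itv_cover w u : cyl_itv w u -> ~ fin_itv w u ->
  exists a, cyl_itv (rcons w a) u.
Proof.
move=> [h1 h2] nJ; apply/not_existsP => nI.
have base : lend w + Q w <= u by rewrite leNgt; apply/negP => h; apply: nJ.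
suff: forall k, (k <= n)%N -> lend w + Q w + mass_before w k <= u.
  by move=> /(_ n (leqnn _)); rewrite mass_before_all -addrA -PQ leNgt h2.
elim=> [_|k IH kn]; first by rewrite /mass_before big_pred0 ?addr0.
pose i := Ordinal kn; pose a := enum_val i.
have ri : enum_rank a = i by rewrite enum_valK.
have : ~ (u < lend w + Q w + mass_before w i + P (rcons w a)).
  by move=> h; apply: (nI a); rewrite /cyl_itv lend_rcons ri; split => //; exact: IH (ltnW kn).
by rewrite (mass_beforeS w i) addrA => /negP; rewrite -leNgt.
Qed.

Lemma cyl_itv_cat w t : cyl_itv (w ++ t) `<=` cyl_itv w.
Proof.
elim/last_ind: t => [|t a IH]; first by rewrite cats0.
by rewrite -rcons_cat => u /cyl_itv_rcons /IH.
Qed.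

Lemma cyl_itv_take w k : cyl_itv w `<=` cyl_itv (take k w).
Proof. by rewrite -{1}(cat_take_drop k w); exact: cyl_itv_cat. Qed.

Lemma cyl_itv_inj_size v w u : size v = size w ->
  cyl_itv v u -> cyl_itv w u -> v = w.
Proof.
elim/last_ind: v w => [|v a IH] w; first by case: w.
case/lastP: w => [|w b]; first by rewrite size_rcons.
rewrite !size_rcons => -[sz] hv hw.
have vw := IH _ sz (cyl_itv_rcons hv) (cyl_itv_rcons hw); subst w.
by have [->//|ab] := eqVneq a b; case: (cyl_itv_rcons_disj ab hv hw).
Qed.

Lemma cyl_itv_prefix v w u : cyl_itv w u -> cyl_itv v u -> (size v <= size w)%N ->
  v = take (size v) w.
Proof.
move=> hw hv le; apply: (cyl_itv_inj_size _ hv (cyl_itv_take _ hw)).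
by rewrite size_take; case: ltngtP le.
Qed.

Lemma fin_itv_maximal v w u : fin_itv v u -> cyl_itv w u -> (size w <= size v)%N.
Proof.
move=> hJ hw; rewrite leqNgt; apply/negP => lt.
have [x0 _] : exists x0 : A, True by case: w {hw} lt => [|x _] //; exists x.
have := cyl_itv_take (size v).+1 hw; rewrite (take_nth x0 lt).
rewrite -(cyl_itv_prefix hw (fin_itv_sub hJ) (ltnW lt)).
exact: fin_cyl_itv_rcons_disj hJ.
Qed.

Lemma fin_itv_uniq v w u : fin_itv v u -> fin_itv w u -> v = w.
Proof.
move=> hv hw; apply: cyl_itv_inj_size (fin_itv_sub hv) (fin_itv_sub hw).
by apply/eqP; rewrite eqn_leq (fin_itv_maximal hv (fin_itv_sub hw))
  (fin_itv_maximal hw (fin_itv_sub hv)).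
Qed.

Lemma cyl_itv_exists_size u : cyl_itv [::] u -> (forall v, ~ fin_itv v u) ->
  forall k, exists w, size w = k /\ cyl_itv w u.
Proof.
move=> h0 nJ; elim=> [|k [w [sw hw]]]; first by exists [::].
have [a ha] := cyl_itv_cover hw (nJ w).
by exists (rcons w a); rewrite size_rcons sw.
Qed.

(* The k-th letter is read off the unique word of length k+1 whose interval
   contains u; [a0] is only a default letter for [nth]. *)
Definition decode u : word A :=
  if pselect (exists v, fin_itv v u) is left _ then WFin (xget [::] (fin_itv^~ u))
  else match [pick a : A] with
       | Some a0 =>
           WInf (fun k => nth a0 (xget [::] (fun v => size v = k.+1 /\ cyl_itv v u)) k)
       | None => WFin [::]
       end.

Let pick_letter u : cyl_itv [::] u -> ~ (exists v, fin_itv v u) -> [pick a : A] != None.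
Proof.
move=> h0 nex; have nJ v : ~ fin_itv v u by move=> hv; apply: nex; exists v.
have [[|x w] [//= _ _]] := cyl_itv_exists_size h0 nJ 1.
by case: pickP => // /(_ x).
Qed.

Lemma decode_fin u w : cyl_itv [::] u -> (decode u = WFin w <-> fin_itv w u).
Proof.
move=> h0; rewrite /decode; case: pselect => [ex|nex].
  have hx := xgetPex [::] ex.
  by split => [[<-]//|hw]; congr WFin; exact: fin_itv_uniq hx hw.
move: (pick_letter h0 nex); case: pickP => // a0 _ _.
by split => [//|hw]; exfalso; apply: nex; exists w.
Qed.

Lemma decode_cyl u w : cyl_itv [::] u -> (cyl w (decode u) <-> cyl_itv w u).
Proof.
move=> h0; rewrite /decode; case: pselect => [ex|nex].
  have hv := xgetPex [::] ex; set v := xget _ _ in hv *.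
  split.
    by move=> /cylE /= <-; apply: cyl_itv_take; exact: fin_itv_sub.
  move=> hw; apply/cylE => /=.
  by rewrite -(cyl_itv_prefix (fin_itv_sub hv) hw (fin_itv_maximal hv hw)).
move: (pick_letter h0 nex); case: pickP => // a0 _ _.
have nJ v : ~ fin_itv v u by move=> hv; apply: nex; exists v.
pose W k := xget [::] (fun v => size v = k /\ cyl_itv v u).
have hW k : size (W k) = k /\ cyl_itv (W k) u.
  exact: (xgetPex [::] (cyl_itv_exists_size h0 nJ k)).
have sW k := (hW k).1; have iW k := (hW k).2.
have mkW k : mkseq (fun k => nth a0 (W k.+1) k) k = W k.
  elim: k => [|k IH]; first by have /size0nil -> := sW 0%N.
  have e : W k = take k (W k.+1).
    by rewrite -{2}(sW k); apply: cyl_itv_prefix (iW _) (iW _) _; rewrite !sW.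
  by rewrite mkseqS IH e -take_nth ?sW // take_oversize // sW.
split; first by move=> /cylE; rewrite /wprefix mkW => <-.
by move=> hw; apply/cylE; rewrite /wprefix mkW; apply: cyl_itv_inj_size (iW _) hw.
Qed.

Lemma measurable_cyl_itv w : measurable (cyl_itv w).
Proof. by rewrite cyl_itvE; exact: measurable_itv. Qed.

Lemma measurable_fin_itv w : measurable (fin_itv w).
Proof. by rewrite fin_itvE; exact: measurable_itv. Qed.

Let D := cyl_itv [::].

Lemma decode_preimage_fin w : D `&` decode @^-1` [set WFin w] = fin_itv w.
Proof.
apply/seteqP; split => u; first by move=> [hD /= e]; exact/(decode_fin w hD).
move=> hJ; have hD : D u by apply: (@cyl_itv_cat [::] w); exact: fin_itv_sub.
by split => //; exact/(decode_fin w hD).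
Qed.

Lemma decode_preimage_cyl w : D `&` decode @^-1` cyl w = cyl_itv w.
Proof.
apply/seteqP; split => u; first by move=> [hD /= e]; exact/(decode_cyl w hD).
move=> hI; have hD : D u by apply: (@cyl_itv_cat [::] w).
by split => //; exact/(decode_cyl w hD).
Qed.

Lemma measurable_decode : measurable_fun D (decode : R -> Ainf A).
Proof.
apply: (@measurability _ _ R (Ainf A) D decode (@S_inf A)) => //.
move=> _ [B [[->|[w _ <-]]|[w _ <-]] <-].
- by rewrite preimage_set0 setI0.
- by rewrite decode_preimage_fin; exact: measurable_fin_itv.
- by rewrite decode_preimage_cyl; exact: measurable_cyl_itv.
Qed.

Let mD : measurable D := measurable_cyl_itv [::].

Let nu (S : set (Ainf A)) := lebesgue_measure (D `&` decode @^-1` S).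

Let nu0 : nu set0 = 0%E.
Proof. by rewrite /nu preimage_set0 setI0 measure0. Qed.

Let nu_ge0 S : (0 <= nu S)%E.
Proof. exact: measure_ge0. Qed.

Let nu_sigma_additive : semi_sigma_additive nu.
Proof.
move=> G mG tG mUG; rewrite /nu preimage_bigcup setI_bigcupr.
apply: measure_semi_sigma_additive.
- by move=> k; exact: measurable_decode.
- apply/trivIsetP => /= i j _ _ ij; rewrite setIACA setIid -preimage_setI.
  by move/trivIsetP : tG => /(_ _ _ _ _ ij) ->//; rewrite preimage_set0 setI0.
- by rewrite -setI_bigcupr -preimage_bigcup; exact: measurable_decode.
Qed.

HB.instance Definition _ := isMeasure.Build _ _ _ nu nu0 nu_ge0 nu_sigma_additive.

Hypothesis P_nil_le1 : P [::] <= 1.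

Let nu_setT : (nu [set: Ainf A] <= 1)%E.
Proof.
by rewrite /nu preimage_setT setIT /D cyl_itvE (lebesgue_measure_itv_co _ (P_ge0 _)) lee_fin.
Qed.

HB.instance Definition _ := Measure_isSubProbability.Build _ _ _ nu nu_setT.

Definition coded_measure : giry (Ainf A) R := nu.

Lemma coded_measure_cyl w : coded_measure (cyl w) = (P w)%:E.
Proof.
by rewrite /= /nu decode_preimage_cyl cyl_itvE (lebesgue_measure_itv_co _ (P_ge0 _)).
Qed.

Lemma coded_measure_fin w : coded_measure [set WFin w] = (Q w)%:E.
Proof.
by rewrite /= /nu decode_preimage_fin fin_itvE (lebesgue_measure_itv_co _ (Q_ge0 _)).
Qed.

End interval_coding.

Lemma measure_LX_setT (R : realType) d (A : finType) (X : measurableType d)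
    (mu : ({measure set (LX A X) -> \bar R})%R) :
  mu [set: LX A X] = mu [set None] + \sum_(a : A) mu (injL a @` [set: X]).
Proof.
have -> : [set: LX A X] =
    [set None] `|` \bigcup_(a in [set: A]) (injL a @` [set: X]).
  by apply/seteqP; split => // -[[a y]|] _; [right; exists a => //; exists y|left].
rewrite measureU; first last.
- by apply/seteqP; split => // z [-> [a _ [y _]]].
- apply: fin_bigcup_measurable; first exact: finite_finset.
  by move=> a _; exact: measurable_injL.
- exact: measurable_one.
congr (_ + _); rewrite measure_fin_bigcup; first last.
- by move=> a _; exact: measurable_injL.
- apply/trivIsetP => a b _ _ ab; apply/seteqP; split => // z [[y _ <-] [y' _]].
  by case=> ba _; move: ab; rewrite ba eqxx.
- exact: finite_finset.
rewrite (fsbigE (enum A)) ?enum_uniq //; last by move=> i _; rewrite mem_enum.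
by rewrite big_enum_cond /=; apply: eq_bigl => a; rewrite in_setT.
Qed.

Section behaviour.
Context (R : realType) (d : measure_display) (X : measurableType d) (A : finType)
  (alpha : X -> giry (LX A X) R) (malpha : measurable_fun [set: X] alpha).
Implicit Types (m : giry X R) (w : seq A).

Local Notation tau a := (tau malpha a).

Lemma measurable_alpha_ev (B : set (LX A X)) : measurable B ->
  measurable_fun [set: X] (fun x => alpha x B).
Proof. by move=> mB; exact: (measurableT_comp (measurable_giry_ev mB) malpha). Qed.

Lemma tauE a m S : tau a m S = \int[m]_x alpha x (injL a @` S).
Proof. by []. Qed.

Lemma measurable_tau a : measurable_fun [set: giry X R] (tau a).
Proof.
apply: measurable_giry_codensity => // S mS.
have -> : (fun m => tau a m S) = giry_int ^~ (fun x => alpha x (injL a @` S)).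
  by apply/funext => m; rewrite tauE.
by apply: measurable_giry_int => //; apply: measurable_alpha_ev; exact: measurable_injL.
Qed.

Lemma measurable_beta1 : measurable_fun [set: giry X R] (beta1 alpha).
Proof. by apply: measurable_giry_int => //; exact: measurable_alpha_ev. Qed.

Lemma measurable_betaS : measurable_fun [set: giry X R] (betaS alpha).
Proof.
by apply: measurable_giry_int => //; apply: measurable_alpha_ev; exact: measurable_one.
Qed.

Lemma integral_tau a m (f : X -> \bar R) :
  measurable_fun [set: X] f -> (forall x, 0 <= f x) ->
  giry_int (tau a m) f = \int[m]_x giry_int (tau a (giry_ret x)) f.
Proof.
move=> mf f0.
have mk : measurable_fun [set: X] (fun x => tau a (giry_ret x)).
  exact: measurableT_comp (measurable_tau a) measurable_giry_ret.
have tau_bind S : measurable S -> tau a m S = giry_bind m mk S.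
  move=> mS; rewrite /giry_bind /=.
  change (tau a m S = giry_int (giry_map mk m) (giry_ev ^~ S)).
  rewrite giry_int_map //; last exact: measurable_giry_ev.
  rewrite tauE; apply: eq_integral => x _.
  rewrite /= integral_dirac ?diracT ?mul1e //.
  by apply: measurable_alpha_ev; exact: measurable_injL.
rewrite /giry_int (eq_measure_integral (giry_bind m mk)); last first.
  by move=> S mS _; exact: tau_bind.
exact: giry_int_bind.
Qed.

Fixpoint tau_word w m : giry X R :=
  if w is a :: w' then tau_word w' (tau a m) else m.

Lemma tau_word_rcons w a m : tau_word (rcons w a) m = tau a (tau_word w m).
Proof. by elim: w m => [|b w IH] m //=. Qed.

Lemma measurable_tau_word w : measurable_fun [set: giry X R] (tau_word w).
Proof.
elim: w => [|a w IH] /=; first exact: measurable_id.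
exact: measurableT_comp IH (measurable_tau a).
Qed.

Lemma integral_tau_word w m (f : X -> \bar R) :
  measurable_fun [set: X] f -> (forall x, 0 <= f x) ->
  giry_int (tau_word w m) f = \int[m]_x giry_int (tau_word w (giry_ret x)) f.
Proof.
move=> mf f0; elim: w m => [|a w IH] m /=.
  by apply: eq_integral => x _; rewrite giry_int_ret.
transitivity (giry_int (tau a m) (fun y => giry_int (tau_word w (giry_ret y)) f)).
  exact: IH.
rewrite integral_tau; last 2 first.
- apply: measurableT_comp (measurable_giry_int mf f0) _.
  exact: measurableT_comp (measurable_tau_word w) measurable_giry_ret.
- by move=> y; exact: integral_ge0.
by apply: eq_integral => x _; rewrite IH.
Qed.

Hypothesis alpha_prob : forall x, alpha x [set: LX A X] = 1.

Lemma beta1E m : beta1 alpha m = m [set: X].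
Proof.
rewrite /beta1; under eq_integral do rewrite alpha_prob.
by rewrite integral_cst // mul1e.
Qed.

Lemma beta1_decomp m :
  beta1 alpha m = betaS alpha m + \sum_(a : A) beta1 alpha (tau a m).
Proof.
under eq_bigr do rewrite beta1E tauE.
have mi a : measurable_fun [set: X] (fun x => alpha x (injL a @` [set: X])).
  by apply: measurable_alpha_ev; exact: measurable_injL.
rewrite /betaS -(ge0_integral_sum _ measurableT mi); last first.
  by move=> a x _; exact: measure_ge0.
rewrite -ge0_integralD //.
- by apply: eq_integral => x _; rewrite measure_LX_setT.
- by apply: measurable_alpha_ev; exact: measurable_one.
- by move=> x _; apply: sume_ge0 => a _; exact: measure_ge0.
- by apply: emeasurable_sum => a; exact: mi.
Qed.

Lemma beta1_fin_num m : beta1 alpha m \is a fin_num.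
Proof. by rewrite beta1E ge0_fin_numE ?subprobability_setT_fin. Qed.

Lemma betaS_fin_num m : betaS alpha m \is a fin_num.
Proof.
rewrite ge0_fin_numE; last exact: integral_ge0.
apply: le_lt_trans (subprobability_setT_fin m); rewrite -beta1E beta1_decomp.
by rewrite leeDl //; apply: sume_ge0 => a _; rewrite beta1E.
Qed.

Definition cyl_weight m w := fine (beta1 alpha (tau_word w m)).
Definition fin_weight m w := fine (betaS alpha (tau_word w m)).

Lemma cyl_weight_ge0 m w : (0 <= cyl_weight m w)%R.
Proof. by apply/fine_ge0; rewrite beta1E. Qed.

Lemma fin_weight_ge0 m w : (0 <= fin_weight m w)%R.
Proof. exact/fine_ge0/integral_ge0. Qed.

Lemma cyl_weight_decomp m w :
  cyl_weight m w = (fin_weight m w + \sum_(a : A) cyl_weight m (rcons w a))%R.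
Proof.
apply: EFin_inj; rewrite EFinD -sumEFin /cyl_weight /fin_weight.
rewrite !fineK ?beta1_fin_num ?betaS_fin_num //.
under eq_bigr do rewrite fineK ?beta1_fin_num // tau_word_rcons.
exact: beta1_decomp.
Qed.

Lemma cyl_weight_nil_le1 m : (cyl_weight m [::] <= 1)%R.
Proof.
by rewrite -lee_fin /cyl_weight fineK ?beta1_fin_num // beta1E; exact: sprobability_setT.
Qed.

Definition sem m : giry (Ainf A) R :=
  coded_measure (@cyl_weight_ge0 m) (@fin_weight_ge0 m) (@cyl_weight_decomp m)
    (cyl_weight_nil_le1 m).

Lemma sem_cyl m w : sem m (cyl w) = beta1 alpha (tau_word w m).
Proof. by rewrite coded_measure_cyl /cyl_weight fineK // beta1_fin_num. Qed.

Lemma sem_fin m w : sem m [set WFin w] = betaS alpha (tau_word w m).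
Proof. by rewrite coded_measure_fin /fin_weight fineK // betaS_fin_num. Qed.

Lemma sem_setT m : sem m [set: Ainf A] = beta1 alpha m.
Proof. by rewrite -cyl_nil sem_cyl. Qed.

Lemma sem_wcons m a (S : set (Ainf A)) : measurable S -> sem m (wcons a @` S) = sem (tau a m) S.
Proof.
move=> mS; change (wcons_measure (sem m) a S = sem (tau a m) S).
apply: measure_unique_S_inf => //.
  rewrite (le_lt_trans _ (subprobability_setT_fin (sem m))) //.
  by apply: le_measure; rewrite ?inE //; exact: measurable_image_wcons.
move=> U hU; change (sem m (wcons a @` U) = sem (tau a m) U).
case: hU => [[->|[w _ <-]]|[w _ <-]].
- by rewrite image_set0 !measure0.
- by rewrite image_wcons_set1 !sem_fin.
- by rewrite image_wcons_cyl !sem_cyl.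
Qed.

Lemma measurable_sem : measurable_fun [set: giry X R] sem.
Proof.
apply: measurable_giry_codensity => // B mB.
pose H := [set B : set (Ainf A) | measurable B /\
  measurable_fun [set: giry X R] (fun m => sem m B)].
suff: <<s @S_inf A >> `<=` H by move=> /(_ B mB) [].
apply: (@lambda_system_subset _ _ (@setI_closed_S_inf A) setT H) => //.
- apply/dynkin_lambda_system; split.
  + by split => //; under eq_fun do rewrite sem_setT; exact: measurable_beta1.
  + move=> U [mU semU]; split; first exact: measurableC.
    have -> : (fun m => sem m (~` U)) = (fun m => sem m [set: Ainf A] - sem m U).
      apply/funext => m; rewrite -setTD measureD ?setTI //.
      exact: subprobability_setT_fin.
    apply: emeasurable_funB => //.
    by under eq_fun do rewrite sem_setT; exact: measurable_beta1.
  + move=> F tF HF; split.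
      by apply: bigcupT_measurable => k; exact: (HF k).1.
    have -> : (fun m => sem m (\bigcup_k F k)) =
        (fun m => \sum_(0 <= k <oo) sem m (F k)).
      apply/funext => m; rewrite measure_bigcup //; last by move=> k _; exact: (HF k).1.
      by apply: eq_eseriesl => k; rewrite in_setT.
    apply: ge0_emeasurable_sum => k; first by move=> x _ _; exact: measure_ge0.
    by move=> _; exact: (HF k).2.
- move=> U [[->|[w _ <-]]|[w _ <-]]; split.
  + exact: measurable0.
  + by under eq_fun do rewrite measure0; exact: measurable_cst.
  + exact: measurable_set1_WFin.
  + under eq_fun do rewrite sem_fin.
    exact: measurableT_comp measurable_betaS (measurable_tau_word w).
  + exact: measurable_cyl.
  + under eq_fun do rewrite sem_cyl.
    exact: measurableT_comp measurable_beta1 (measurable_tau_word w).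
Qed.

Lemma coalg_morph_sem : coalg_morph malpha sem.
Proof.
split=> [|m]; first exact: measurable_sem.
split; [exact: sem_setT|exact: (sem_fin m [::])|move=> a S; exact: sem_wcons].
Qed.

Lemma coalg_morph_S_inf (h : giry X R -> giry (Ainf A) R) : coalg_morph malpha h ->
  forall m S, S_inf S -> h m S = sem m S.
Proof.
move=> [_ hm].
have h_word w m : h m (cyl w) = sem m (cyl w) /\ h m [set WFin w] = sem m [set WFin w].
  rewrite sem_cyl sem_fin; elim: w m => [|a w IH] m.
    by have [h1 h2 _] := hm m; rewrite cyl_nil.
  have [_ _ h3] := hm m; have [e1 e2] := IH (tau a m).
  rewrite /= -e1 -e2 -image_wcons_cyl -image_wcons_set1.
  split; rewrite h3 //; [exact: measurable_cyl|exact: measurable_set1_WFin].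
move=> m S [[->|[w _ <-]]|[w _ <-]]; first by rewrite !measure0.
- exact: (h_word w m).2.
- exact: (h_word w m).1.
Qed.

Lemma sem_integral m S : S_inf S -> sem m S = \int[m]_x sem (giry_ret x) S.
Proof.
move=> [[->|[w _ <-]]|[w _ <-]].
- by rewrite measure0; under eq_integral do rewrite measure0; rewrite integral0.
- rewrite sem_fin; under eq_integral do rewrite sem_fin.
  by apply: integral_tau_word => //; apply: measurable_alpha_ev; exact: measurable_one.
- rewrite sem_cyl; under eq_integral do rewrite sem_cyl.
  by apply: integral_tau_word => //; exact: measurable_alpha_ev.
Qed.

End behaviour.

Theorem mainTheorem12 (R : realType) (d : measure_display)
  (X : measurableType d) (A : finType)
  (alpha : X -> giry (LX A X) R)
  (malpha : measurable_fun [set: X] alpha)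
  (alpha_prob : forall x : X, alpha x [set: LX A X] = 1) :
  (forall m : giry X R,
      beta1 alpha m = betaS alpha m + \sum_(a : A) beta1 alpha (tau malpha a m)) /\
  exists h : giry X R -> giry (Ainf A) R,
    [/\ coalg_morph malpha h,
        (forall h' : giry X R -> giry (Ainf A) R, coalg_morph malpha h' ->
           forall (m : giry X R) (S : set (Ainf A)), measurable S -> h' m S = h m S) &
        (forall (m : giry X R) (S : set (Ainf A)), @S_inf A S ->
           h m S = \int[m]_x h (giry_ret x) S)].
Proof.
split; first exact: beta1_decomp.
exists (sem malpha alpha_prob); split.
- exact: coalg_morph_sem.
- move=> h hmorph m S mS; apply: measure_unique_S_inf => //.
    exact: subprobability_setT_fin.
  exact: coalg_morph_S_inf.
- exact: sem_integral.
Qed.
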